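(* Let $G$ be a finite simple graph with $n=|V(G)|$, and let $v_1,\dots,v_r$, $r\ge 2$, be a $\beta$-sequence in $G$ such that $N(v_1,\dots,v_{r-1})$ is a $\delta$-set in $G$. Then $r\ge W(G)$.
   Context: Graphs are finite, undirected, without loops or multiple edges; $N(v)$ is the set of vertices adjacent to $v$, $d(v)=|N(v)|$, and $N(v_1,\dots,v_k)=\bigcap_{j=1}^k N(v_j)$. Define $W(G)=\sum_{v\in V(G)}\frac{1}{n-d(v)}$. A set $V\subseteq V(G)$ is a $\delta$-set in $G$ if $d(v)\le n-|V|$ for all $v\in V$. A sequence $v_1,\dots,v_r$ of vertices is a $\beta$-sequence in $G$ if (i) $d(v_1)=\max\{d(v)\mid v\in V(G)\}$, and (ii) for $2\le i\le r$, $v_i\in N(v_1,\dots,v_{i-1})$ and $d(v_i)=\max\{d(v)\mid v\in N(v_1,\dots,v_{i-1})\}$ (degrees taken in $G$). *)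

(* A finite simple graph is a symmetric irreflexive relation
   e : rel T on a finType T; V(G) = T, n = #|T|. *)
From mathcomp Require Import all_boot all_order all_algebra.
Set Implicit Arguments. Unset Strict Implicit. Unset Printing Implicit Defensive.
Import Order.TTheory GRing.Theory Num.Theory.

Section Graph.
Variables (T : finType) (e : rel T).

Definition nbhd (v : T) : {set T} := [set u | e v u].
Definition deg (v : T) : nat := #|nbhd v|.

Definition common_nbhd (s : seq T) : {set T} := [set u | all (fun w => e w u) s].

Definition W : rat := \sum_(v : T) ((#|T| - deg v)%:R)^-1.

Definition delta_set (V : {set T}) : Prop :=
  forall v, v \in V -> deg v <= #|T| - #|V|.

(* beta-sequence s = [v_1; ...; v_r]; entry nth x s i (0-based) is v_{i+1},
   and N(v_1,...,v_i) = common_nbhd (take i s). *)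
Definition beta_seq (s : seq T) : Prop :=
  match s with
  | [::] => False
  | x :: _ =>
      (forall u, deg u <= deg x) /\
      (forall i, 1 <= i < size s ->
         nth x s i \in common_nbhd (take i s) /\
         (forall u, u \in common_nbhd (take i s) -> deg u <= deg (nth x s i)))
  end.
End Graph.

(* Write A_k = N(v_1,...,v_k), with A_0 = V, and let W(X) be the part of the sum
   W(G) over X.  Every u in the layer A_(k-1) \ A_k has d(u) <= d(v_k) by the
   greedy choice of v_k, and the layer misses N(v_k), so it has at most
   n - d(v_k) vertices, each contributing at most 1/(n - d(v_k)): W(layer) <= 1.
   The last set A_(r-1) is a delta-set, so each of its vertices contributes at
   most 1/|A_(r-1)| and W(A_(r-1)) <= 1.  Telescoping over the r - 1 layers gives
   W(G) <= (r - 1) + 1. *)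

From mathcomp Require Import all_boot all_order all_algebra.
From mathcomp Require Import zify.
Import Order.TTheory GRing.Theory Num.Theory.
Set Implicit Arguments. Unset Strict Implicit. Unset Printing Implicit Defensive.
Local Open Scope ring_scope.

Lemma sum_inv_nat_le1 {R : numFieldType} (I : finType) (X : {set I}) (f : I -> nat) (m : nat) :
  (#|X| <= m)%N -> (forall i, i \in X -> m <= f i)%N ->
  \sum_(i in X) ((f i)%:R : R)^-1 <= 1.
Proof.
move=> card_le f_ge; have [m0|m_gt0] := posnP m.
  move: card_le; rewrite m0 leqn0 cards_eq0 => /eqP ->.
  by rewrite big_set0.
have le_inv i : i \in X -> ((f i)%:R : R)^-1 <= (m%:R)^-1.
  move=> iX; rewrite lef_pV2 ?posrE ?ltr0n ?ler_nat ?f_ge //.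
  exact: leq_trans m_gt0 (f_ge i iX).
apply: le_trans (ler_sum _ le_inv) _.
rewrite sumr_const -[_ *+ #|X|]mulr_natl (le_trans (y := m%:R * m%:R^-1)) //.
  by rewrite ler_pM2r ?invr_gt0 ?ltr0n // ler_nat.
by rewrite divff // pnatr_eq0 -lt0n.
Qed.

Section CommonNeighbourhoods.
Variables (T : finType) (e : rel T).

Definition W_on (X : {set T}) : rat := \sum_(v in X) ((#|T| - deg e v)%:R)^-1.

Lemma W_on_setT : W_on [set: T] = W e.
Proof. by apply: eq_bigl => v; rewrite inE. Qed.

Lemma W_on_setID (X Y : {set T}) : W_on X = W_on (X :&: Y) + W_on (X :\: Y).
Proof. exact: big_setID. Qed.

Lemma W_on_setD_nbhd_le1 (X : {set T}) (v : T) :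
  (forall u, u \in X -> deg e u <= deg e v)%N -> W_on (X :\: nbhd e v) <= 1.
Proof.
move=> deg_max; apply: (sum_inv_nat_le1 (m := #|T| - deg e v)).
  rewrite /deg -[nbhd e v]setCK -cardsCs setCK; apply/subset_leq_card/subsetP => u.
  by rewrite in_setD in_setC => /andP[].
by move=> u /setDP[uX _]; rewrite leq_sub2l ?deg_max.
Qed.

Lemma delta_set_W_on_le1 (V : {set T}) : delta_set e V -> W_on V <= 1.
Proof.
move=> dV; apply: (sum_inv_nat_le1 (m := #|V|)) => // v vV.
have := dV v vV; have := max_card (nbhd e v); have := max_card V; lia.
Qed.

Lemma common_nbhd0 : common_nbhd e [::] = [set: T].
Proof. by apply/setP => u; rewrite !inE. Qed.

Lemma common_nbhd_rcons (s : seq T) (v : T) :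
  common_nbhd e (rcons s v) = common_nbhd e s :&: nbhd e v.
Proof. by apply/setP => u; rewrite !inE all_rcons andbC. Qed.

Lemma W_on_common_nbhd_telescope (s : seq T) (x0 : T) (k : nat) :
  (forall i, i < size s -> forall u, u \in common_nbhd e (take i s) ->
     deg e u <= deg e (nth x0 s i))%N ->
  (k <= size s)%N -> W e <= W_on (common_nbhd e (take k s)) + k%:R.
Proof.
move=> greedy; elim: k => [|k IHk] lt_k_s.
  by rewrite take0 common_nbhd0 W_on_setT addr0.
apply: le_trans (IHk (ltnW lt_k_s)) _.
rewrite (W_on_setID _ (nbhd e (nth x0 s k))) -common_nbhd_rcons -take_nth //.
rewrite -natr1 addrA (addrAC _ _ k%:R) lerD2l.
exact/W_on_setD_nbhd_le1/greedy.
Qed.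

End CommonNeighbourhoods.

Lemma beta_seq_greedy (T : finType) (e : rel T) (x : T) (s : seq T) :
  beta_seq e (x :: s) ->
  forall i, (i < size (x :: s))%N -> forall u, u \in common_nbhd e (take i (x :: s)) ->
    (deg e u <= deg e (nth x (x :: s) i))%N.
Proof.
move=> [deg_x_max beta] [|i] lt_i_s u; first by move=> _; exact: deg_x_max.
exact: (beta i.+1 lt_i_s).2.
Qed.

Theorem theorem3 (T : finType) (e : rel T) (e_sym : symmetric e)
  (e_irr : irreflexive e) (s : seq T) :
  beta_seq e s -> (2 <= size s)%N ->
  delta_set e (common_nbhd e (take (size s).-1 s)) ->
  W e <= (size s)%:R.
Proof.
case: s => [//|x s] beta _ /= delta.
apply: le_trans (W_on_common_nbhd_telescope (beta_seq_greedy beta) (leqnSn (size s))) _.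
by rewrite -natr1 addrC lerD2l delta_set_W_on_le1.
Qed.
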